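(* Let $\ell_1,\ell_2,\ell_3,\ell_4$ be pairwise skew lines in $\mathbb{P}^3$ (over $\mathbb{C}$), and suppose that there is a unique line $\ell\subset\mathbb{P}^3$ that intersects all of $\ell_1,\ell_2,\ell_3,\ell_4$. Let $\pi\colon Y\to\mathbb{P}^3$ be the blow up of $\ell$, with exceptional divisor $E\cong\mathbb{P}^1\times\mathbb{P}^1$, and let $\tilde{\ell}_1,\ldots,\tilde{\ell}_4$ be the proper transforms on $Y$ of $\ell_1,\ldots,\ell_4$. Then there exists a unique curve $C\subset E$ of bi-degree $(1,1)$ that intersects each of $\tilde{\ell}_1,\tilde{\ell}_2,\tilde{\ell}_3,\tilde{\ell}_4$. *)

From HB Require Import structures.
From mathcomp Require Import all_boot all_order all_algebra.
From mathcomp Require Import complex.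
From mathcomp Require Import Rstruct.
From Stdlib Require Import Reals.
Set Implicit Arguments. Unset Strict Implicit. Unset Printing Implicit Defensive.
Import Order.TTheory GRing.Theory Num.Theory.
Local Open Scope ring_scope.

Definition CC : closedFieldType := (Rdefinitions.R)[i].

(* Projective 3-space P^3(C): points are nonzero row vectors x : 'rV[CC]_4
   (up to scaling).  A line of P^3 is given by a 2 x 4 matrix of rank 2,
   i.e. the projectivization of its 2-dimensional row space. *)
Definition is_line (L : 'M[CC]_(2,4)) : bool := \rank L == 2.

Definition on_line (x : 'rV[CC]_4) (L : 'M[CC]_(2,4)) : bool :=
  (x != 0) && (x <= L)%MS.

Definition lines_meet (L M : 'M[CC]_(2,4)) : Prop :=
  exists x : 'rV[CC]_4, on_line x L /\ on_line x M.

Definition skew_lines (L M : 'M[CC]_(2,4)) : Prop := ~ lines_meet L M.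

(* Y = { ([x],[v]) in P^3 x P(C^4/l) : x lies in the plane <l, v> },
   where the second factor P(C^4/l) (= the pencil of planes through l)
   has points represented by vectors v not in l, [v] = [v'] iff
   v' in C^* v + l.  The blow-up map pi is the first projection. *)
Definition blowup_pt (L : 'M[CC]_(2,4)) (x v : 'rV[CC]_4) : Prop :=
  x != 0 /\ ~~ (v <= L)%MS /\ (x <= col_mx L v)%MS.

(* The exceptional divisor E = pi^{-1}(l) = l x P(C^4/l) ~ P^1 x P^1. *)
Definition exc_pt (L : 'M[CC]_(2,4)) (x v : 'rV[CC]_4) : Prop :=
  blowup_pt L x v /\ (x <= L)%MS.

Definition proper_transform_pt (L M : 'M[CC]_(2,4)) (x v : 'rV[CC]_4) : Prop :=
  blowup_pt L x v /\ (x <= M)%MS /\ (M <= col_mx L v)%MS.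

(* A curve of bidegree (1,1) on E = P(l) x P(C^4/l): the zero locus of a
   nonzero bilinear form on l x (C^4/l).  Such a form is given by a 4x4
   matrix B with  L B L^T = 0  (so that b(x,v) = x B v^T only depends on v
   modulo l) and  L B <> 0  (nonzero on l x C^4/l).
   A curve is a subset of E, represented as a predicate on representatives. *)
Definition bideg11_curve (L : 'M[CC]_(2,4))
    (C : 'rV[CC]_4 -> 'rV[CC]_4 -> Prop) : Prop :=
  exists B : 'M[CC]_4,
    L *m B *m L^T = 0 /\ L *m B != 0 /\
    forall x v, C x v <-> (exc_pt L x v /\ x *m B *m v^T = 0).

Definition meets_transform (L M : 'M[CC]_(2,4))
    (C : 'rV[CC]_4 -> 'rV[CC]_4 -> Prop) : Prop :=
  exists x v, C x v /\ proper_transform_pt L M x v.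

From HB Require Import structures.
From mathcomp Require Import all_boot all_order all_algebra.
From mathcomp Require Import complex.
From mathcomp Require Import Rstruct.
From Stdlib Require Import Reals.
From mathcomp Require Import ring.
Import Order.TTheory GRing.Theory Num.Theory.
Set Implicit Arguments. Unset Strict Implicit. Unset Printing Implicit Defensive.
Local Open Scope ring_scope.

(* Fix a complement W = <Z> of l = <L>, with projections PL and PW.  A point
   of E = l x P(C^4/l) then has coordinates (u, w) in C^2 x C^2, and a
   (1,1)-curve is the zero set of a nonzero bilinear form X(u, w).  The proper
   transform of l_i meets E only at (c_i, h_i), where c_i is the point of l on
   l_i and h_i the plane spanned by l and l_i; skewness makes the c_i pairwise
   independent, and the h_i too.
   Uniqueness: a nonzero form vanishing at three such points is determined up
   to a scalar.
   Existence: X(c_i, h_i) = 0 (i < 4) is a square linear system.  Since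
   X(u, w) = det(w G, u) for G = X^T rot, its matrix also governs the lines
   G L + Z (graphs of maps W -> l, all different from l): such a line meets l_i
   iff det(h_i G - a_i, c_i) = 0, where a_i L + h_i Z is a point of l_i off l.
   Were the matrix invertible, one of these lines would meet all four l_i,
   contradicting the uniqueness of l. *)

Section Plane.
Variable F : fieldType.
Implicit Types (u v w : 'rV[F]_2) (X : 'M[F]_2).

Lemma ord2P (P : 'I_2 -> Prop) : P 0 -> P 1 -> forall j, P j.
Proof.
move=> P0 P1 [[|[|//]] lt_j2]; first by rewrite (_ : Ordinal _ = 0) //; apply/val_inj.
by rewrite (_ : Ordinal _ = 1) //; apply/val_inj.
Qed.

Lemma rv2P u v : u 0 0 = v 0 0 -> u 0 1 = v 0 1 -> u = v.
Proof. by move=> e0 e1; apply/rowP; apply: ord2P. Qed.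

Lemma sum_ord2 (f : 'I_2 -> F) : \sum_(j < 2) f j = f 0 + f 1.
Proof.
by rewrite !big_ord_recl big_ord0 addr0 (_ : lift ord0 ord0 = 1) //; apply/val_inj.
Qed.

Definition det2 u v : F := u 0 0 * v 0 1 - u 0 1 * v 0 0.

Definition bil X u w : F := (u *m X *m w^T) 0 0.

Lemma bilE X u w : bil X u w =
  u 0 0 * X 0 0 * w 0 0 + u 0 0 * X 0 1 * w 0 1 +
  u 0 1 * X 1 0 * w 0 0 + u 0 1 * X 1 1 * w 0 1.
Proof. by rewrite /bil !(mxE, sum_ord2); ring. Qed.

Definition rot2 : 'M[F]_2 :=
  \matrix_(i, j) (if i == j then 0 else if i == 0 then -1 else 1).

Lemma det2_mulmx_rot2 X u w : det2 (w *m (X^T *m rot2)) u = bil X u w.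
Proof. by rewrite bilE /det2 !(mxE, sum_ord2) /=; ring. Qed.

Lemma det2C u v : det2 u v = - det2 v u.
Proof. by rewrite /det2; ring. Qed.

Lemma det2Zl a u v : det2 (a *: u) v = a * det2 u v.
Proof. by rewrite /det2 !mxE; ring. Qed.

Lemma det2Bl u v w : det2 (u - v) w = det2 u w - det2 v w.
Proof. by rewrite /det2 !mxE; ring. Qed.

Lemma det2_eq0P u v : v != 0 -> reflect (exists a, u = a *: v) (det2 u v == 0).
Proof.
move=> v_neq0; apply: (iffP eqP) => [|[a ->]]; last by rewrite det2Zl /det2; ring.
have [v0|v0] := eqVneq (v 0 0) 0.
  have v1 : v 0 1 != 0.
    by apply: contraNneq v_neq0 => v1; apply/eqP/rv2P; rewrite mxE.
  move=> d0; exists (u 0 1 / v 0 1); apply: rv2P; rewrite !mxE ?divfK //.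
  move: d0; rewrite /det2 v0 => /eqP; rewrite subr_eq0 mulr0 => /eqP ud.
  by apply: (mulIf v1); rewrite ud; field.
move=> d0; exists (u 0 0 / v 0 0); apply: rv2P; rewrite !mxE ?divfK //.
by apply: (mulIf v0); move: d0 => /eqP; rewrite subr_eq0 => /eqP <-; field.
Qed.

Lemma det2_coords u v w : det2 u v != 0 ->
  w = (det2 w v / det2 u v) *: u + (det2 u w / det2 u v) *: v.
Proof. by move=> d_neq0; apply: rv2P; rewrite !mxE /det2; field. Qed.

Lemma bilZl X a u w : bil X (a *: u) w = a * bil X u w.
Proof. by rewrite !bilE !mxE; ring. Qed.

Lemma bilZr X a u w : bil X u (a *: w) = a * bil X u w.
Proof. by rewrite !bilE !mxE; ring. Qed.

Lemma bil_delta X i j : bil X (delta_mx 0 i) (delta_mx 0 j) = X i j.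
Proof.
by rewrite bilE !mxE; move: i j; apply: ord2P; apply: ord2P; rewrite /=; ring.
Qed.

Definition eval_mx k (u w : 'I_k -> 'rV[F]_2) : 'M[F]_(2 * 2, k) :=
  \matrix_(j, i) bil (vec_mx (delta_mx 0 j)) (u i) (w i).

Lemma eval_mxE k (u w : 'I_k -> 'rV[F]_2) z i :
  (z *m eval_mx u w) 0 i = bil (vec_mx z) (u i) (w i).
Proof.
rewrite mxE /eval_mx /bil {2}(row_sum_delta z) linear_sum mulmx_sumr mulmx_suml summxE.
by apply: eq_bigr => j _; rewrite linearZ /= -scalemxAr -scalemxAl [in LHS]mxE [in RHS]mxE.
Qed.

Lemma bil_vanishing4_alternative (u w : 'I_4 -> 'rV[F]_2) :
  (exists2 X : 'M_2, X != 0 & forall i, bil X (u i) (w i) = 0) \/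
  (forall b : 'rV[F]_4, exists G : 'M_2, forall i, det2 (w i *m G) (u i) = b 0 i).
Proof.
have [/eqP/det0P [z z_neq0 zN]|detN] := eqVneq (\det (eval_mx u w)) 0.
  left; exists (vec_mx z); first by rewrite vec_mx_eq0.
  by move=> i; rewrite -eval_mxE zN mxE.
right=> b; exists ((vec_mx (b *m invmx (eval_mx u w)))^T *m rot2) => i.
rewrite det2_mulmx_rot2 -eval_mxE mulmxKV //.
by rewrite unitmxE unitfE.
Qed.

Section ThreePoints.
Variables u1 u2 u3 w1 w2 w3 : 'rV[F]_2.
Hypotheses (u12 : det2 u1 u2 != 0) (u13 : det2 u1 u3 != 0).
Hypotheses (w12 : det2 w1 w2 != 0) (w23 : det2 w2 w3 != 0).

Let p u w := det2 u u2 * det2 w1 w.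
Let q u w := det2 u1 u * det2 w w2.

Lemma bil_expand X u w :
  bil X u w * (det2 u1 u2 * det2 w1 w2) =
  det2 u u2 * det2 w w2 * bil X u1 w1 + p u w * bil X u1 w2 +
  q u w * bil X u2 w1 + det2 u1 u * det2 w1 w * bil X u2 w2.
Proof. by rewrite /p /q !bilE /det2; ring. Qed.

Lemma bil_vanishing3 X : X != 0 ->
  bil X u1 w1 = 0 -> bil X u2 w2 = 0 -> bil X u3 w3 = 0 ->
  exists2 k, k != 0 & forall u w, bil X u w = k * (p u w * q u3 w3 - q u w * p u3 w3).
Proof.
(* In the bases (u1, u2) and (w1, w2) the first two points kill the diagonal
   coefficients of X, and the third fixes the ratio of the other two. *)
move=> X_neq0 X11 X22 X33.
have D_neq0 : det2 u1 u2 * det2 w1 w2 != 0 by rewrite mulf_neq0.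
have q3_neq0 : q u3 w3 != 0 by rewrite /q (det2C w3) mulf_neq0 ?oppr_eq0.
have X_uw u w : bil X u w * (det2 u1 u2 * det2 w1 w2) =
    p u w * bil X u1 w2 + q u w * bil X u2 w1.
  by rewrite bil_expand X11 X22; ring.
have X21 : bil X u2 w1 = - p u3 w3 * bil X u1 w2 / q u3 w3.
  apply: (mulfI q3_neq0); rewrite [RHS]mulrC divfK //.
  by apply/eqP; rewrite -subr_eq0 mulNr opprK addrC -X_uw X33 mul0r.
have X12_neq0 : bil X u1 w2 != 0.
  apply: contraNneq X_neq0 => X12; apply/eqP/matrixP => i j.
  by rewrite -bil_delta mxE; apply: (mulIf D_neq0); rewrite X_uw X21 X12; ring.
exists (bil X u1 w2 / (q u3 w3 * (det2 u1 u2 * det2 w1 w2))).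
  by rewrite mulf_neq0 // invr_eq0 mulf_neq0.
by move=> u w; apply: (mulIf D_neq0); rewrite X_uw X21; field; rewrite w12 u12 q3_neq0.
Qed.

Lemma bil_zero_set_eq X X' : X != 0 -> X' != 0 ->
  bil X u1 w1 = 0 -> bil X u2 w2 = 0 -> bil X u3 w3 = 0 ->
  bil X' u1 w1 = 0 -> bil X' u2 w2 = 0 -> bil X' u3 w3 = 0 ->
  forall u w, (bil X u w == 0) = (bil X' u w == 0).
Proof.
move=> X_neq0 X'_neq0 X11 X22 X33 X'11 X'22 X'33 u w.
have [k k_neq0 ->] := bil_vanishing3 X_neq0 X11 X22 X33.
have [k' k'_neq0 ->] := bil_vanishing3 X'_neq0 X'11 X'22 X'33.
by rewrite !mulf_eq0 (negbTE k_neq0) (negbTE k'_neq0).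
Qed.

End ThreePoints.

End Plane.

Section Complement.
Variable F : fieldType.

Lemma mul_row2_col_mx n (v : 'rV[F]_(1 + 1)) (p r : 'rV[F]_n) :
  v *m col_mx p r = lsubmx v 0 0 *: p + rsubmx v 0 0 *: r.
Proof.
rewrite -{1}[v]hsubmxK mul_row_col.
by rewrite {1}(mx11_scalar (lsubmx v)) {1}(mx11_scalar (rsubmx v)) !mul_scalar_mx.
Qed.

Lemma mx11_eq0 (A : 'M[F]_1) : (A == 0) = (A 0 0 == 0).
Proof.
apply/eqP/eqP => [->|A0]; first by rewrite mxE.
by apply/matrixP => i j; rewrite !ord1 A0 mxE.
Qed.

Lemma complement_basis m n (L : 'M[F]_(m, m + n)) : \rank L = m ->
  exists (Z : 'M[F]_(n, m + n)) (PL : 'M[F]_(m + n, m)) (PW : 'M[F]_(m + n, n)),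
  [/\ L *m PL = 1%:M, L *m PW = 0, Z *m PW = 1%:M & PL *m L + PW *m Z = 1%:M].
Proof.
move=> rL; set R := row_ebase L; set C := col_ebase L.
pose E1 : 'M[F]_(m, m + n) := row_mx 1%:M 0.
pose E2 : 'M[F]_(n, m + n) := row_mx 0 1%:M.
have eL : L = C *m E1 *m R by rewrite /E1 -pid_mx_row -{1}[L]mulmx_ebase rL.
have uR : R \in unitmx by exact: row_ebase_unit.
have uC : C \in unitmx by exact: col_ebase_unit.
have E11 : E1 *m E1^T = 1%:M by rewrite tr_row_mx mul_row_col trmx1 trmx0 mulmx1 mulmx0 addr0.
have E12 : E1 *m E2^T = 0 by rewrite tr_row_mx mul_row_col trmx1 trmx0 mulmx1 mulmx0 addr0.
have E22 : E2 *m E2^T = 1%:M by rewrite tr_row_mx mul_row_col trmx1 trmx0 mulmx1 mulmx0 add0r.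
have E_id : E1^T *m E1 + E2^T *m E2 = 1%:M.
  rewrite !tr_row_mx !mul_col_row !trmx1 !trmx0 !mul0mx !mulmx0 !mul1mx add_block_mx.
  by rewrite !addr0 !add0r -scalar_mx_block.
exists (E2 *m R), (invmx R *m E1^T *m invmx C), (invmx R *m E2^T).
rewrite eL; split.
- by rewrite -!mulmxA (mulmxA R) mulmxV // mul1mx (mulmxA E1) E11 mul1mx mulmxV.
- by rewrite -!mulmxA (mulmxA R) mulmxV // mul1mx E12 mulmx0.
- by rewrite -!mulmxA (mulmxA R) mulmxV // mul1mx E22.
rewrite -!mulmxA (mulmxA (invmx C)) mulVmx // mul1mx.
by rewrite !mulmxA -mulmxDl -(mulmxA _ E1^T) -(mulmxA _ E2^T) -mulmxDr E_id mulmx1 mulVmx.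
Qed.

Variables (m n k : nat) (L : 'M[F]_(m, k)) (Z : 'M[F]_(n, k)).
Variables (PL : 'M[F]_(k, m)) (PW : 'M[F]_(k, n)).
Hypotheses (LPW : L *m PW = 0) (PLZ_id : PL *m L + PW *m Z = 1%:M).

Lemma complement_decomp (x : 'rV[F]_k) : x = x *m PL *m L + x *m PW *m Z.
Proof. by rewrite -!mulmxA -mulmxDr PLZ_id mulmx1. Qed.

Lemma sub_complement (x : 'rV[F]_k) : (x <= L)%MS = (x *m PW == 0).
Proof.
apply/idP/eqP => [/submxP [D ->]|xPW]; first by rewrite -mulmxA LPW mulmx0.
by rewrite (complement_decomp x) xPW mul0mx addr0 submxMl.
Qed.

Lemma sub_complementE (x : 'rV[F]_k) : (x <= L)%MS -> x = x *m PL *m L.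
Proof.
by rewrite sub_complement => /eqP xPW; rewrite {1}(complement_decomp x) xPW mul0mx addr0.
Qed.

Lemma form_complementE (B : 'M[F]_k) (x v : 'rV[F]_k) :
  L *m B *m L^T = 0 -> (x <= L)%MS ->
  x *m B *m v^T = x *m PL *m (L *m B *m Z^T) *m (v *m PW)^T.
Proof.
move=> LBL xL; rewrite {1}(sub_complementE xL) {1}(complement_decomp v) linearD /=.
by rewrite !trmx_mul mulmxDr !mulmxA -!(mulmxA (x *m PL)) LBL !mul0mx mulmx0 add0r !mulmxA.
Qed.

Lemma form_complement_neq0 (B : 'M[F]_k) :
  L *m B *m L^T = 0 -> L *m B != 0 -> L *m B *m Z^T != 0.
Proof.
move=> LBL; apply: contra => /eqP LBZ.
have : (PL *m L + PW *m Z)^T = 1%:M by rewrite PLZ_id trmx1.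
rewrite linearD /= !trmx_mul => id_T.
by rewrite -[L *m B]mulmx1 -id_T mulmxDr !mulmxA LBL LBZ !mul0mx addr0.
Qed.

End Complement.

Section Configuration.
Variables (L Z : 'M[CC]_(2, 4)) (PL PW : 'M[CC]_(4, 2)).
Hypotheses (LPL : L *m PL = 1%:M) (LPW : L *m PW = 0) (ZPW : Z *m PW = 1%:M).
Hypothesis PLZ_id : PL *m L + PW *m Z = 1%:M.
Variable l : 'I_4 -> 'M[CC]_(2, 4).
Hypotheses (L_rank : \rank L = 2) (l_rank : forall i, \rank (l i) = 2).
Hypothesis l_skew : forall i j, i != j -> skew_lines (l i) (l j).
Hypothesis L_meet : forall i, lines_meet L (l i).

Let subL := sub_complement LPW PLZ_id.
Let subLE := sub_complementE LPW PLZ_id.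

Lemma skew_no_common_point i j (x : 'rV[CC]_4) :
  i != j -> x != 0 -> (x <= l i)%MS -> (x <= l j)%MS -> False.
Proof.
by move=> ij x_neq0 xi xj; apply: (l_skew ij); exists x; rewrite /on_line x_neq0 xi xj.
Qed.

Lemma line_notin_L i : ~~ (l i <= L)%MS.
Proof.
apply/negP => liL.
have Lli : (L <= l i)%MS by rewrite -(mxrank_leqif_sup liL).2 L_rank l_rank.
have [j ij] : exists j, i != j by case: (eqVneq i 0) => [->|i0]; [exists 1 | exists 0].
have [x [/andP [x_neq0 xL] /andP [_ xj]]] := L_meet j.
exact: (skew_no_common_point ij x_neq0 (submx_trans xL Lli) xj).
Qed.

Lemma exists_meet_point i : exists x, on_line x L && on_line x (l i).
Proof. by have [x [xL xi]] := L_meet i; exists x; rewrite xL xi. Qed.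

Lemma exists_off_point i : exists x : 'rV[CC]_4, (x <= l i)%MS && ~~ (x <= L)%MS.
Proof.
by have /row_subPn [k k_notin] := line_notin_L i; exists (row k (l i)); rewrite row_sub.
Qed.

(* In the notation of the header, c_i = meet_coord i and h_i = plane_coord i. *)
Definition meet_pt i := xchoose (exists_meet_point i).
Definition off_pt i := xchoose (exists_off_point i).
Definition meet_coord i := meet_pt i *m PL.
Definition plane_coord i := off_pt i *m PW.

Lemma meet_ptP i : [/\ meet_pt i != 0, (meet_pt i <= L)%MS & (meet_pt i <= l i)%MS].
Proof. by have /andP [/andP [-> ->] /andP [_ ->]] := xchooseP (exists_meet_point i). Qed.

Lemma off_ptP i : (off_pt i <= l i)%MS /\ ~~ (off_pt i <= L)%MS.
Proof. exact/andP/(xchooseP (exists_off_point i)). Qed.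

Lemma meet_ptE i : meet_pt i = meet_coord i *m L.
Proof. by have [_ pL _] := meet_ptP i; exact: subLE. Qed.

Lemma meet_pt_PW i : meet_pt i *m PW = 0.
Proof. by have [_ pL _] := meet_ptP i; apply/eqP; rewrite -subL. Qed.

Lemma meet_coord_neq0 i : meet_coord i != 0.
Proof.
have [p_neq0 _ _] := meet_ptP i.
by apply: contraNneq p_neq0; rewrite meet_ptE => ->; rewrite mul0mx.
Qed.

Lemma plane_coord_neq0 i : plane_coord i != 0.
Proof. by have [_] := off_ptP i; rewrite subL. Qed.

Lemma line_spanned i : (l i <= col_mx (meet_pt i) (off_pt i))%MS.
Proof.
have [p_neq0 _ pi] := meet_ptP i; have [ri _] := off_ptP i.
have sub_li : (col_mx (meet_pt i) (off_pt i) <= l i)%MS by rewrite col_mx_sub pi ri.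
have /eqP free : row_free (col_mx (meet_pt i) (off_pt i)).
  apply: inj_row_free => v; rewrite mul_row2_col_mx => v_ker.
  have b0 : rsubmx v 0 0 = 0.
    have /eqP := congr1 (mulmx^~ PW) v_ker.
    rewrite mulmxDl -!scalemxAl meet_pt_PW scaler0 add0r mul0mx scaler_eq0.
    by rewrite (negbTE (plane_coord_neq0 i)) orbF => /eqP.
  have a0 : lsubmx v 0 0 = 0.
    move: v_ker; rewrite b0 scale0r addr0 => /eqP.
    by rewrite scaler_eq0 (negbTE p_neq0) orbF => /eqP.
  rewrite -[v]hsubmxK (mx11_scalar (lsubmx v)) (mx11_scalar (rsubmx v)).
  by rewrite a0 b0 raddf0 row_mx0.
by rewrite -(mxrank_leqif_sup sub_li).2 free l_rank.
Qed.

Lemma sub_line_coords i (x : 'rV[CC]_4) : (x <= l i)%MS ->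
  exists a b, x = a *: meet_pt i + b *: off_pt i.
Proof.
move=> xi; have /submxP [v ->] := submx_trans xi (line_spanned i).
by rewrite mul_row2_col_mx; do 2 eexists.
Qed.

Lemma meet_coord_indep i j : i != j -> det2 (meet_coord i) (meet_coord j) != 0.
Proof.
move=> ij; apply/negP; rewrite det2C oppr_eq0 => /(det2_eq0P _ (meet_coord_neq0 i)) [s pj].
have [pj_neq0 _ pjj] := meet_ptP j; have [_ _ pii] := meet_ptP i.
apply: (skew_no_common_point ij pj_neq0 _ pjj).
by rewrite meet_ptE pj -scalemxAl -meet_ptE scalemx_sub.
Qed.

Lemma plane_coord_indep i j : i != j -> det2 (plane_coord i) (plane_coord j) != 0.
Proof.
move=> ij; apply/negP; rewrite det2C oppr_eq0 => /(det2_eq0P _ (plane_coord_neq0 i)) [s hj].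
pose y := off_pt j - s *: off_pt i.
have yL : (y <= L)%MS.
  by rewrite subL mulmxBl -scalemxAl -/(plane_coord i) -/(plane_coord j) hj subrr.
have [a [b y_meet]] : exists a b, y = a *: meet_pt i + b *: meet_pt j.
  exists (det2 (y *m PL) (meet_coord j) / det2 (meet_coord i) (meet_coord j)).
  exists (det2 (meet_coord i) (y *m PL) / det2 (meet_coord i) (meet_coord j)).
  rewrite {1}(subLE yL) {1}(det2_coords (y *m PL) (meet_coord_indep ij)).
  by rewrite mulmxDl -!scalemxAl -!meet_ptE.
have [_ _ pii] := meet_ptP i; have [_ _ pjj] := meet_ptP j.
have [rii _] := off_ptP i; have [rjj _] := off_ptP j.
apply: (skew_no_common_point (x := off_pt j - b *: meet_pt j) ij).
- apply: contraNneq (plane_coord_neq0 j) => /(congr1 (mulmx^~ PW)).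
  by rewrite mulmxBl -scalemxAl meet_pt_PW scaler0 subr0 mul0mx /plane_coord => ->.
- have -> : off_pt j - b *: meet_pt j = s *: off_pt i + a *: meet_pt i.
    by apply/eqP; rewrite subr_eq -addrA -y_meet /y addrC subrK.
  by rewrite addmx_sub ?scalemx_sub.
- by rewrite -scaleNr addmx_sub ?scalemx_sub.
Qed.

Lemma exc_transform_coords i x v : exc_pt L x v -> proper_transform_pt L (l i) x v ->
  (exists2 a, a != 0 & x *m PL = a *: meet_coord i) /\
  (exists b, plane_coord i = b *: (v *m PW)).
Proof.
move=> [[x_neq0 _] xL] [_ [xi li_plane]]; split.
- have [a [b x_def]] := sub_line_coords xi.
  have b0 : b = 0.
    move: xL; rewrite subL x_def mulmxDl -!scalemxAl meet_pt_PW scaler0 add0r scaler_eq0.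
    by rewrite (negbTE (plane_coord_neq0 i)) orbF => /eqP.
  move: x_def; rewrite b0 scale0r addr0 => x_def.
  exists a; first by apply: contraNneq x_neq0 => a0; rewrite x_def a0 scale0r.
  by rewrite x_def -scalemxAl.
- have [ri _] := off_ptP i.
  have /submxP [D rE] := submx_trans ri li_plane.
  exists (rsubmx D 0 0).
  rewrite /plane_coord rE -{1}[D]hsubmxK mul_row_col mulmxDl -mulmxA LPW mulmx0 add0r.
  by rewrite -mulmxA {1}(mx11_scalar (rsubmx D)) mul_scalar_mx.
Qed.

Lemma exc_transform_point i :
  exc_pt L (meet_pt i) (off_pt i) /\ proper_transform_pt L (l i) (meet_pt i) (off_pt i).
Proof.
have [p_neq0 pL pi] := meet_ptP i; have [_ r_notL] := off_ptP i.
have pPlane : (meet_pt i <= col_mx L (off_pt i))%MS.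
  by apply: submx_trans pL _; rewrite -addsmxE addsmxSl.
have rPlane : (off_pt i <= col_mx L (off_pt i))%MS by rewrite -addsmxE addsmxSr.
do !split => //; apply: submx_trans (line_spanned i) _.
by rewrite col_mx_sub pPlane rPlane.
Qed.

Definition curve_of (B : 'M[CC]_4) (x v : 'rV[CC]_4) : Prop :=
  exc_pt L x v /\ x *m B *m v^T = 0.

Lemma curve_ofE B x v : L *m B *m L^T = 0 ->
  curve_of B x v <-> exc_pt L x v /\ bil (L *m B *m Z^T) (x *m PL) (v *m PW) = 0.
Proof.
move=> LBL; rewrite /curve_of; split=> -[e z]; split=> //; apply/eqP; move/eqP: z.
all: have [_ xL] := e; by rewrite mx11_eq0 (form_complementE LPW PLZ_id _ LBL xL).
Qed.

Lemma curve_of_meets_transform B i : L *m B *m L^T = 0 ->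
  meets_transform L (l i) (curve_of B) <->
  bil (L *m B *m Z^T) (meet_coord i) (plane_coord i) = 0.
Proof.
move=> LBL; split=> [[x [v [Cxv t]]]|X0].
  have [e X_xv] := (curve_ofE x v LBL).1 Cxv.
  have [[a a_neq0 xE] [b hE]] := exc_transform_coords e t.
  move: X_xv; rewrite xE bilZl => /eqP; rewrite mulf_eq0 (negbTE a_neq0) /= => /eqP X0.
  by rewrite hE bilZr X0 mulr0.
have [e t] := exc_transform_point i.
by exists (meet_pt i), (off_pt i); split => //; apply/curve_ofE.
Qed.

Lemma curves_through_transforms_eq B B' :
  L *m B *m L^T = 0 -> L *m B != 0 -> L *m B' *m L^T = 0 -> L *m B' != 0 ->
  (forall i, meets_transform L (l i) (curve_of B)) ->
  (forall i, meets_transform L (l i) (curve_of B')) ->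
  forall x v, curve_of B x v <-> curve_of B' x v.
Proof.
move=> LBL LB_neq0 LB'L LB'_neq0 B_meets B'_meets x v.
have X_neq0 := form_complement_neq0 PLZ_id LBL LB_neq0.
have X'_neq0 := form_complement_neq0 PLZ_id LB'L LB'_neq0.
have X0 i := (curve_of_meets_transform i LBL).1 (B_meets i).
have X'0 i := (curve_of_meets_transform i LB'L).1 (B'_meets i).
have same_zeros u w :
    (bil (L *m B *m Z^T) u w == 0) = (bil (L *m B' *m Z^T) u w == 0).
  by apply: (@bil_zero_set_eq _ (meet_coord 0) (meet_coord 1) (meet_coord 2)
    (plane_coord 0) (plane_coord 1) (plane_coord 2));
    rewrite ?meet_coord_indep ?plane_coord_indep.
rewrite !curve_ofE //; split=> -[e /eqP Xxv]; split=> //; apply/eqP.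
  by rewrite -same_zeros.
by rewrite same_zeros.
Qed.

Definition lift_form (X : 'M[CC]_2) : 'M[CC]_4 := PL *m X *m PW^T.

Lemma lift_form_LL X : L *m lift_form X *m L^T = 0.
Proof. by rewrite /lift_form !mulmxA LPL mul1mx -mulmxA -trmx_mul LPW trmx0 mulmx0. Qed.

Lemma lift_formK X : L *m lift_form X *m Z^T = X.
Proof. by rewrite /lift_form !mulmxA LPL mul1mx -mulmxA -trmx_mul ZPW trmx1 mulmx1. Qed.

Definition graph_line (G : 'M[CC]_2) : 'M[CC]_(2, 4) := G *m L + Z.

Lemma graph_line_PW G : graph_line G *m PW = 1%:M.
Proof. by rewrite /graph_line mulmxDl -mulmxA LPW mulmx0 add0r ZPW. Qed.

Lemma graph_line_is_line G : is_line (graph_line G).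
Proof.
rewrite /is_line eqn_leq rank_leq_row /=.
by have := mxrankM_maxl (graph_line G) PW; rewrite graph_line_PW mxrank1.
Qed.

Lemma graph_line_notin_L G : ~~ (graph_line G <= L)%MS.
Proof.
apply/negP => /submxP [D MD]; have /matrixP /(_ 0 0) := graph_line_PW G.
by rewrite MD -mulmxA LPW mulmx0 !mxE /= => /eqP; rewrite eq_sym oner_eq0.
Qed.

Lemma graph_line_meets G i :
  det2 (plane_coord i *m G) (meet_coord i) = det2 (off_pt i *m PL) (meet_coord i) ->
  lines_meet (graph_line G) (l i).
Proof.
move=> /eqP; rewrite -subr_eq0 -det2Bl => /(det2_eq0P _ (meet_coord_neq0 i)) [s sE].
pose q := plane_coord i *m graph_line G.
have qE : q = s *: meet_pt i + off_pt i.
  rewrite /q /graph_line mulmxDr mulmxA -[plane_coord i *m G](subrK (off_pt i *m PL)) sE.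
  by rewrite mulmxDl -scalemxAl -meet_ptE -addrA /plane_coord -complement_decomp.
have q_neq0 : q != 0.
  apply: contraNneq (plane_coord_neq0 i) => q0.
  by rewrite -[plane_coord i]mulmx1 -(graph_line_PW G) mulmxA -/q q0 mul0mx.
have [_ _ pi] := meet_ptP i; have [ri _] := off_ptP i.
exists q; rewrite /on_line q_neq0 submxMl; split=> //.
by rewrite qE addmx_sub ?scalemx_sub.
Qed.

Lemma exists_form_through_transforms :
  (forall M, is_line M -> (forall i, lines_meet M (l i)) -> (M == L)%MS) ->
  exists2 X : 'M[CC]_2, X != 0 & forall i, bil X (meet_coord i) (plane_coord i) = 0.
Proof.
move=> L_unique; have [//|solvable] := bil_vanishing4_alternative meet_coord plane_coord.
have [G GE] := solvable (\row_i det2 (off_pt i *m PL) (meet_coord i)).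
have G_meets i : lines_meet (graph_line G) (l i) by apply: graph_line_meets; rewrite GE mxE.
have /andP [GL _] := L_unique _ (graph_line_is_line G) G_meets.
by rewrite (negbTE (graph_line_notin_L G)) in GL.
Qed.

Lemma bideg11_curve_exists_unique :
  (forall M, is_line M -> (forall i, lines_meet M (l i)) -> (M == L)%MS) ->
  exists C, bideg11_curve L C /\ (forall i, meets_transform L (l i) C) /\
    forall C', bideg11_curve L C' -> (forall i, meets_transform L (l i) C') ->
      forall x v, C' x v <-> C x v.
Proof.
move=> L_unique; have [X X_neq0 X0] := exists_form_through_transforms L_unique.
have LB_neq0 : L *m lift_form X != 0.
  by apply: contraNneq X_neq0 => LB0; rewrite -(lift_formK X) LB0 mul0mx.
have B_meets i : meets_transform L (l i) (curve_of (lift_form X)).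
  by apply/(curve_of_meets_transform i (lift_form_LL X)); rewrite lift_formK.
exists (curve_of (lift_form X)); split; [|split=> //].
  by exists (lift_form X); split; [exact: lift_form_LL | split].
move=> C' [B' [LB'L [LB'_neq0 C'E]]] C'_meets x v.
have B'_meets i : meets_transform L (l i) (curve_of B').
  by have [y [w [C'yw t]]] := C'_meets i; exists y, w; split=> //; apply/C'E.
rewrite C'E; apply: curves_through_transforms_eq => //; exact: lift_form_LL.
Qed.

End Configuration.

Theorem lemma6p13 (l : 'I_4 -> 'M[CC]_(2,4)) (L : 'M[CC]_(2,4)) :
  (forall i, is_line (l i)) ->
  (forall i j : 'I_4, i != j -> skew_lines (l i) (l j)) ->
  is_line L ->
  (forall i, lines_meet L (l i)) ->
  (forall M, is_line M -> (forall i, lines_meet M (l i)) -> (M == L)%MS) ->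
  exists C, bideg11_curve L C /\ (forall i, meets_transform L (l i) C) /\
    forall C', bideg11_curve L C' -> (forall i, meets_transform L (l i) C') ->
      forall x v, C' x v <-> C x v.
Proof.
move=> l_line l_skew /eqP L_rank L_meet L_unique.
have l_rank i : \rank (l i) = 2 by apply/eqP/l_line.
have [W [PL [PW [LPL LPW WPW PLW_id]]]] := @complement_basis _ 2 2 L L_rank.
exact: (bideg11_curve_exists_unique LPL LPW WPW PLW_id L_rank l_rank l_skew L_meet L_unique).
Qed.
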